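(* Let $\rho,\sigma$ be retractable contracts with $\rho$ compliant with $\sigma$. Then one of the following holds: (1) $\rho=\mathbf 1$; (2) $\rho=\sum_{i\in I}\alpha_i.\rho_i$ and $\sigma=\sum_{j\in J}\bar\alpha_j.\sigma_j$ (retractable choices) and there exists $k\in I\cap J$ such that $\rho_k$ is compliant with $\sigma_k$; (3) $\rho=\bigoplus_{i\in I}\bar a_i.\rho_i$, $\sigma=\sum_{j\in J}a_j.\sigma_j$, $I\subseteq J$, and $\rho_k$ is compliant with $\sigma_k$ for all $k\in I$; (4) $\rho=\sum_{i\in I}a_i.\rho_i$, $\sigma=\bigoplus_{j\in J}\bar a_j.\sigma_j$, $I\supseteq J$, and $\rho_k$ is compliant with $\sigma_k$ for all $k\in J$.
   Context: Let $\mathcal N$ be a countable set of names and $\overline{\mathcal N}=\{\bar a\mid a\in\mathcal N\}$ a disjoint set of conames; $\alpha$ ranges over $\mathcal N\cup\overline{\mathcal N}$, with $\bar{\bar a}=a$. Retractable contracts are the closed expressions generated by $\sigma ::= \mathbf 1 \mid \sum_{i\in I} a_i.\sigma_i \ (\text{input}) \mid \sum_{i\in I}\bar a_i.\sigma_i\ (\text{retractable output}) \mid \bigoplus_{i\in I}\bar a_i.\sigma_i\ (\text{unretractable output}) \mid x \mid \mathsf{rec}\,x.\sigma$, where $I$ is non-empty and finite, names/conames in each choice are pairwise distinct, and $\sigma$ is not a variable in $\mathsf{rec}\,x.\sigma$. Choices are commutative; $\mathsf{rec}\,x.\sigma$ is identified with $\sigma[\mathsf{rec}\,x.\sigma/x]$.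 A unary $\bar a.\sigma$ may be read as either kind of output. Sums written $\sum$ are retractable choices (input or retractable output). Histories are stacks $\vec\gamma ::= [\,] \mid \vec\gamma:\sigma$ with $\sigma$ a retractable contract or the special symbol $\circ$. A contract with history is a pair $\langle\vec\gamma,\sigma\rangle$ with $\sigma$ a contract or $\circ$. Transitions: $\langle\vec\gamma,\alpha.\sigma+\sigma'\rangle\xrightarrow{\alpha}\langle\vec\gamma:\sigma',\sigma\rangle$ (for retractable choices); $\langle\vec\gamma,\bar a.\sigma\oplus\sigma'\rangle\xrightarrow{\tau}\langle\vec\gamma,\bar a.\sigma\rangle$; $\langle\vec\gamma,\alpha.\sigma\rangle\xrightarrow{\alpha}\langle\vec\gamma:\circ,\sigma\rangle$; $\langle\vec\gamma:\sigma',\sigma\rangle\xrightarrow{\mathsf{rb}}\langle\vec\gamma,\sigma'\rangle$. Client/server pairs $\langle\vec\delta,\rho\rangle\parallel\langle\vec\gamma,\sigma\rangle$ reduce by: (comm) if $\langle\vec\delta,\rho\rangle\xrightarrow{\alpha}\langle\vec\delta',\rho'\rangle$ and $\langle\vec\gamma,\sigma\rangle\xrightarrow{\bar\alpha}\langle\vec\gamma',\sigma'\rangle$ then the pair reduces to $\langle\vec\delta',\rho'\rangle\parallel\langle\vec\gamma',\sigma'\rangle$; ($\tau$) a $\tau$-transition of either component alone; (rbk) if both components do an $\mathsf{rb}$ transition and $\rho\neq\mathbf 1$, both roll back simultaneously; rule (rbk) applies only if neither (comm) nor ($\tau$) applies. Then $\langle\vec\delta,\rho\rangle$ is compliant with $\langle\vec\gamma,\sigma\rangle$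 if whenever $\langle\vec\delta,\rho\rangle\parallel\langle\vec\gamma,\sigma\rangle$ reduces in finitely many steps to a pair $\langle\vec\delta',\rho'\rangle\parallel\langle\vec\gamma',\sigma'\rangle$ with no further reduction, we have $\rho'=\mathbf 1$. A contract $\rho$ is compliant with $\sigma$ if $\langle[\,],\rho\rangle$ is compliant with $\langle[\,],\sigma\rangle$. *)

From Stdlib Require Import List.
Import ListNotations.

(* Names are natural numbers; variables are natural numbers (named, not de Bruijn). *)
Inductive act : Type := Nm (a : nat) | CoNm (a : nat).

Definition dual (x : act) : act :=
  match x with Nm a => CoNm a | CoNm a => Nm a end.

(* A choice is a list of (name, continuation);
   CIn l      = sum_i a_i.s_i            (input, retractable)
   CROut l    = sum_i \bar a_i.s_i       (retractable output)
   CUOut l    = (+)_i \bar a_i.s_i       (unretractable output) *)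
Inductive ctr : Type :=
| COne : ctr
| CIn : list (nat * ctr) -> ctr
| CROut : list (nat * ctr) -> ctr
| CUOut : list (nat * ctr) -> ctr
| CVar : nat -> ctr
| CRec : nat -> ctr -> ctr.

(* Substitution of s for the free occurrences of x in t.  It is only used with
   s closed, so capture cannot happen. *)
Fixpoint subst (x : nat) (s : ctr) (t : ctr) : ctr :=
  match t with
  | COne => COne
  | CIn l => CIn (map (fun p => (fst p, subst x s (snd p))) l)
  | CROut l => CROut (map (fun p => (fst p, subst x s (snd p))) l)
  | CUOut l => CUOut (map (fun p => (fst p, subst x s (snd p))) l)
  | CVar y => if Nat.eqb x y then s else CVar y
  | CRec y b => if Nat.eqb x y then CRec y b else CRec y (subst x s b)
  end.

Inductive wfu : list nat -> ctr -> Prop :=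
| wf_one B : wfu B COne
| wf_in B l : l <> [] -> NoDup (map fst l) ->
    (forall a c, In (a, c) l -> wfu B c) -> wfu B (CIn l)
| wf_rout B l : l <> [] -> NoDup (map fst l) ->
    (forall a c, In (a, c) l -> wfu B c) -> wfu B (CROut l)
| wf_uout B l : l <> [] -> NoDup (map fst l) ->
    (forall a c, In (a, c) l -> wfu B c) -> wfu B (CUOut l)
| wf_var B x : In x B -> wfu B (CVar x)
| wf_rec B x s : (forall y, s <> CVar y) -> wfu (x :: B) s -> wfu B (CRec x s).

Definition contract (c : ctr) : Prop := wfu [] c.

(* Unf c c' : c' is the head form of c, obtained by unfolding rec x.s to
   s[rec x.s / x] until the head is not a rec (rec x.s is identified with its
   unfolding). *)
Inductive Unf : ctr -> ctr -> Prop :=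
| unf_one : Unf COne COne
| unf_in l : Unf (CIn l) (CIn l)
| unf_rout l : Unf (CROut l) (CROut l)
| unf_uout l : Unf (CUOut l) (CUOut l)
| unf_rec x s c' : Unf (subst x (CRec x s) s) c' -> Unf (CRec x s) c'.

Definition is_one (c : ctr) : Prop := Unf c COne.

(* States: the current component is a contract or the symbol o (None). *)
Definition slot := option ctr.
Definition hist := list slot.          (* head of the list = top of the stack *)
Definition state := (hist * slot)%type.

Inductive lts : state -> act -> state -> Prop :=
| lts_in h c l1 a s l2 :
    Unf c (CIn (l1 ++ (a, s) :: l2)) -> l1 ++ l2 <> [] ->
    lts (h, Some c) (Nm a) (Some (CIn (l1 ++ l2)) :: h, Some s)
| lts_rout h c l1 a s l2 :
    Unf c (CROut (l1 ++ (a, s) :: l2)) -> l1 ++ l2 <> [] ->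
    lts (h, Some c) (CoNm a) (Some (CROut (l1 ++ l2)) :: h, Some s)
| lts_in1 h c a s :
    Unf c (CIn [(a, s)]) -> lts (h, Some c) (Nm a) (None :: h, Some s)
| lts_rout1 h c a s :
    Unf c (CROut [(a, s)]) -> lts (h, Some c) (CoNm a) (None :: h, Some s)
| lts_uout1 h c a s :
    Unf c (CUOut [(a, s)]) -> lts (h, Some c) (CoNm a) (None :: h, Some s).

Inductive tau : state -> state -> Prop :=
| tau_uout h c l1 a s l2 :
    Unf c (CUOut (l1 ++ (a, s) :: l2)) -> l1 ++ l2 <> [] ->
    tau (h, Some c) (h, Some (CUOut [(a, s)])).

Inductive rb : state -> state -> Prop :=
| rb_pop h g x : rb (g :: h, x) (h, g).

Definition config := (state * state)%type.   (* client || server *)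

Inductive red0 : config -> config -> Prop :=
| red_comm p p' q q' al :
    lts p al p' -> lts q (dual al) q' -> red0 (p, q) (p', q')
| red_tau_l p p' q : tau p p' -> red0 (p, q) (p', q)
| red_tau_r p q q' : tau q q' -> red0 (p, q) (p, q').

Definition slot_is_one (x : slot) : Prop :=
  match x with Some c => is_one c | None => False end.

Inductive red : config -> config -> Prop :=
| red_base C C' : red0 C C' -> red C C'
| red_rbk p p' q q' :
    rb p p' -> rb q q' -> ~ slot_is_one (snd p) ->
    (~ exists C', red0 (p, q) C') ->
    red (p, q) (p', q').

Inductive reds : config -> config -> Prop :=
| reds_refl C : reds C C
| reds_step C C' C'' : red C C' -> reds C' C'' -> reds C C''.

Definition compliant_st (p q : state) : Prop :=
  forall p' q', reds (p, q) (p', q') -> (~ exists C, red (p', q') C) ->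
    slot_is_one (snd p').

Definition compliant (rho sigma : ctr) : Prop :=
  compliant_st ([], Some rho) ([], Some sigma).

(* "c = sum_i alpha_i.c_i" (retractable choice, input or retractable output;
   a unary unretractable output may be read as a retractable one);
   L lists the (alpha_i, c_i). *)
Definition rsum (c : ctr) (L : list (act * ctr)) : Prop :=
  exists l,
    (Unf c (CIn l) /\ L = map (fun p => (Nm (fst p), snd p)) l) \/
    ((Unf c (CROut l) \/ (Unf c (CUOut l) /\ length l = 1)) /\
       L = map (fun p => (CoNm (fst p), snd p)) l).

Definition uout (c : ctr) (l : list (nat * ctr)) : Prop :=
  Unf c (CUOut l) \/ (Unf c (CROut l) /\ length l = 1).

Definition isum (c : ctr) (l : list (nat * ctr)) : Prop := Unf c (CIn l).

(* A failing run of a pair started with empty histories can be replayed on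
   top of any two histories of equal height.  When it gets stuck with a client
   different from 1, its histories are again empty, so on the replayed run the
   rule (rbk) fires and pops both histories.  Hence, when two retractable
   choices synchronise on a branch whose continuations are not compliant, the
   pair rolls back to the two choices deprived of that branch; by induction on
   the number of branches, some pair of matching continuations must be
   compliant.  An unretractable output, or a unary prefix, leaves o in the
   history, so rolling back past it leaves a dead client: every
   synchronisation it takes part in must therefore lead to compliant
   continuations, and every output the client commits to must be accepted. *)

From Stdlib Require Import List Classical Lia.
Import ListNotations.

Lemma Unf_det c k1 k2 : Unf c k1 -> Unf c k2 -> k1 = k2.
Proof.
  intros U; revert k2; induction U; intros k2 U2; inversion U2; subst; auto.
Qed.

Lemma Unf_head c k : Unf c k -> match k with CVar _ | CRec _ _ => False | _ => True end.
Proof. induction 1; simpl; auto. Qed.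

Ltac unf_det := repeat match goal with
  | H1 : Unf ?c ?k1, H2 : Unf ?c ?k2 |- _ =>
      tryif constr_eq k1 k2 then fail else
      (let E := fresh "E" in pose proof (Unf_det _ _ _ H1 H2) as E;
       clear H2; try discriminate E; try (injection E; intros; subst))
  end.

Lemma unary_split {A} (x y : A) l1 l2 : [x] = l1 ++ y :: l2 -> x = y /\ l1 ++ l2 = [].
Proof. destruct l1 as [|z [|w l1]]; simpl; inversion 1; auto. Qed.

(** * Transitions of a single contract *)

Definition rchoice (input : bool) (l : list (nat * ctr)) : ctr :=
  if input then CIn l else CROut l.

Definition rlabel (input : bool) (a : nat) : act := if input then Nm a else CoNm a.

Lemma Unf_rchoice b l : Unf (rchoice b l) (rchoice b l).
Proof. destruct b; constructor. Qed.

Lemma dual_rlabel b a : dual (rlabel b a) = rlabel (negb b) a.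
Proof. now destruct b. Qed.

Lemma rlabel_inj b a a' : rlabel b a = rlabel b a' -> a = a'.
Proof. destruct b; injection 1; auto. Qed.

Lemma lts_rchoice b c l a s : Unf c (rchoice b l) -> In (a, s) l ->
  exists g, (forall h, lts (h, Some c) (rlabel b a) (g :: h, Some s)) /\
    (g = None \/ exists l', g = Some (rchoice b l') /\ incl l' l /\ length l' < length l).
Proof.
  intros U I; apply in_split in I as (l1 & l2 & ->).
  destruct (l1 ++ l2) as [|z r] eqn:E.
  - apply app_eq_nil in E as [-> ->]; exists None; split; [|now left].
    intro h; destruct b; [apply lts_in1 | apply lts_rout1]; exact U.
  - exists (Some (rchoice b (l1 ++ l2))); split.
    + intro h; destruct b; [apply lts_in | apply lts_rout]; try exact U;
        rewrite E; discriminate.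
    + right; exists (l1 ++ l2); repeat split.
      * intros y Hy; apply in_app_or in Hy; apply in_or_app; simpl; tauto.
      * rewrite !length_app; simpl; lia.
Qed.

Lemma lts_Nm_inv h c a q : lts (h, Some c) (Nm a) q -> exists l s, Unf c (CIn l) /\ In (a, s) l.
Proof. inversion 1; subst; eauto using in_elt, in_eq. Qed.

Lemma lts_CoNm_inv h c a q : lts (h, Some c) (CoNm a) q ->
  exists l s, (Unf c (CROut l) \/ Unf c (CUOut l)) /\ In (a, s) l.
Proof. inversion 1; subst; eauto using in_elt, in_eq. Qed.

Lemma lts_rchoice_inv b c l h al q : Unf c (rchoice b l) -> lts (h, Some c) al q ->
  exists a s, al = rlabel b a /\ In (a, s) l.
Proof.
  intros U L; destruct al as [a|a].
  - apply lts_Nm_inv in L as (l' & s & U' & I).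
    destruct b; simpl in U; unf_det; eauto.
  - apply lts_CoNm_inv in L as (l' & s & [U'|U'] & I);
      destruct b; simpl in U; unf_det; eauto.
Qed.

Lemma lts_uout_unary h c a s : uout c [(a, s)] -> lts (h, Some c) (CoNm a) (None :: h, Some s).
Proof. intros [U | [U _]]; [apply lts_uout1 | apply lts_rout1]; exact U. Qed.

Lemma lts_uout_unary_inv h c a s al q : uout c [(a, s)] -> lts (h, Some c) al q -> al = CoNm a.
Proof.
  intros Uc L; destruct al as [b|b].
  - apply lts_Nm_inv in L as (l & t & U & _); destruct Uc as [Uc | [Uc _]]; unf_det.
  - apply lts_CoNm_inv in L as (l & t & U & I).
    assert (E : l = [(a, s)]) by
      (destruct Uc as [Uc | [Uc _]], U as [U|U]; unf_det; reflexivity).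
    subst l; destruct I as [E|[]]; injection E; intros; subst; reflexivity.
Qed.

Lemma tau_inv h x q : tau (h, x) q ->
  exists c l1 a s l2, x = Some c /\ Unf c (CUOut (l1 ++ (a, s) :: l2)) /\
    l1 ++ l2 <> [] /\ q = (h, Some (CUOut [(a, s)])).
Proof. inversion 1; subst; do 5 eexists; eauto. Qed.

Lemma no_tau_head h c k q : Unf c k -> (forall l, k <> CUOut l) -> ~ tau (h, Some c) q.
Proof.
  intros U K T; apply tau_inv in T as (c' & l1 & a & s & l2 & E & U' & _).
  injection E; intros; subst; exact (K _ (Unf_det _ _ _ U U')).
Qed.

Lemma no_tau_rchoice h b c l q : Unf c (rchoice b l) -> ~ tau (h, Some c) q.
Proof. intro U; apply (no_tau_head _ _ _ _ U); destruct b; discriminate. Qed.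

Lemma no_tau_uout_unary h c a s q : uout c [(a, s)] -> ~ tau (h, Some c) q.
Proof.
  intros [U | [U _]] T.
  - apply tau_inv in T as (c' & l1 & b & t & l2 & E & U' & N & _).
    injection E; intros; subst.
    injection (Unf_det _ _ _ U U') as E'.
    exact (N (proj2 (unary_split _ _ _ _ E'))).
  - exact (no_tau_head _ _ _ _ U ltac:(discriminate) T).
Qed.

Lemma not_one_head c k : Unf c k -> k <> COne -> ~ slot_is_one (Some c).
Proof. intros U K O; exact (K (Unf_det _ _ _ U O)). Qed.

Lemma not_one_rchoice b c l : Unf c (rchoice b l) -> ~ slot_is_one (Some c).
Proof. intro U; apply (not_one_head _ _ U); destruct b; discriminate. Qed.

Lemma not_one_uout c l : uout c l -> ~ slot_is_one (Some c).
Proof. intros [U | [U _]]; apply (not_one_head _ _ U); discriminate. Qed.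

Lemma uout_commit h c l a s : Unf c (CUOut l) -> In (a, s) l ->
  uout c [(a, s)] \/ tau (h, Some c) (h, Some (CUOut [(a, s)])).
Proof.
  intros U I; apply in_split in I as (l1 & l2 & ->).
  destruct (l1 ++ l2) eqn:E.
  - apply app_eq_nil in E as [-> ->]; left; left; exact U.
  - right; apply (tau_uout _ _ _ _ _ _ U); rewrite E; discriminate.
Qed.

(** * Failure *)

Definition stuck (C : config) : Prop := ~ exists C', red C C'.

Definition fails (p q : state) : Prop :=
  exists p' q', reds (p, q) (p', q') /\ stuck (p', q') /\ ~ slot_is_one (snd p').

Lemma fails_not_compliant_st p q : fails p q -> ~ compliant_st p q.
Proof. intros (p' & q' & R & S & N) Hc; exact (N (Hc _ _ R S)). Qed.

Lemma not_compliant_st_fails p q : ~ compliant_st p q -> fails p q.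
Proof.
  intro N; apply NNPP; intro F; apply N; intros p' q' R S.
  apply NNPP; intro O; apply F; exists p', q'; auto.
Qed.

Lemma reds_trans C1 C2 C3 : reds C1 C2 -> reds C2 C3 -> reds C1 C3.
Proof. induction 1; intros; [assumption | econstructor; eauto]. Qed.

Lemma reds_fails p q p' q' : reds (p, q) (p', q') -> fails p' q' -> fails p q.
Proof.
  intros R (p2 & q2 & R2 & F); exists p2, q2; split; [eapply reds_trans; eauto | exact F].
Qed.

Lemma red_fails p q p' q' : red (p, q) (p', q') -> fails p' q' -> fails p q.
Proof. intro R; apply reds_fails; econstructor; [exact R | constructor]. Qed.

Lemma compliant_st_red p q p' q' : compliant_st p q -> red (p, q) (p', q') -> compliant_st p' q'.
Proof.
  intros Hc R; apply NNPP; intro N.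
  exact (fails_not_compliant_st _ _ (red_fails _ _ _ _ R (not_compliant_st_fails _ _ N)) Hc).
Qed.

Lemma fails_stuck x y :
  ~ slot_is_one x -> (forall q, ~ tau ([], x) q) -> (forall q, ~ tau ([], y) q) ->
  (forall al p' q', lts ([], x) al p' -> ~ lts ([], y) (dual al) q') ->
  fails ([], x) ([], y).
Proof.
  intros N Tx Ty L; exists ([], x), ([], y); split; [constructor | split; [|exact N]].
  intros [C' R]; inversion R as [? ? R0 | ? ? ? ? B]; subst.
  - inversion R0; subst; [eapply L | eapply Tx | eapply Ty]; eauto.
  - inversion B.
Qed.

(* The server may first commit an unretractable choice, after which it can no
   longer move on its own. *)
Lemma fails_no_sync x y :
  ~ slot_is_one x -> (forall q, ~ tau ([], x) q) ->
  (forall al p' y' q', lts ([], x) al p' -> (y' = y \/ tau ([], y) ([], y')) ->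
     ~ lts ([], y') (dual al) q') ->
  fails ([], x) ([], y).
Proof.
  intros N Tx L.
  destruct (classic (exists q, tau ([], y) q)) as [[q Ty] | NT].
  - pose proof Ty as (c & l1 & a & s & l2 & -> & _ & _ & ->)%tau_inv.
    eapply red_fails; [apply red_base, red_tau_r, Ty |].
    apply fails_stuck; [exact N | exact Tx | |].
    + intro q; apply (no_tau_uout_unary _ _ a s); left; constructor.
    + intros al p' q' Lx; exact (L _ _ _ _ Lx (or_intror Ty)).
  - apply fails_stuck; [exact N | exact Tx | intros q Ty; eauto |].
    intros al p' q' Lx; exact (L _ _ _ _ Lx (or_introl eq_refl)).
Qed.

Lemma fails_inactive_client x y :
  ~ slot_is_one x -> (forall al p', ~ lts ([], x) al p') -> (forall q, ~ tau ([], x) q) ->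
  fails ([], x) ([], y).
Proof.
  intros N L T; apply fails_no_sync; [exact N | exact T |].
  intros al p' y' q' Lx; exfalso; exact (L _ _ Lx).
Qed.

Lemma fails_dead_client y : fails ([], None) ([], y).
Proof. apply fails_inactive_client; [simpl; tauto | inversion 1 | inversion 1]. Qed.

Lemma fails_dead_server x :
  ~ slot_is_one x -> (forall q, ~ tau ([], x) q) -> fails ([], x) ([], None).
Proof. intros N T; apply fails_stuck; [exact N | exact T | inversion 1 | inversion 2]. Qed.

Lemma fails_output_client x d :
  ~ slot_is_one x -> (forall q, ~ tau ([], x) q) ->
  (forall al p', lts ([], x) al p' ->
     exists a, al = CoNm a /\ forall m s, Unf d (CIn m) -> ~ In (a, s) m) ->
  fails ([], x) ([], Some d).
Proof.
  intros N T L; apply fails_no_sync; [exact N | exact T |].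
  intros al p' y' q' Lx Y Ly; destruct (L _ _ Lx) as (a & -> & K).
  destruct Y as [-> | Ty].
  - apply lts_Nm_inv in Ly as (m & s & U & I); exact (K _ _ U I).
  - apply tau_inv in Ty as (c & l1 & b & t & l2 & _ & _ & _ & E).
    injection E; intros; subst.
    apply lts_Nm_inv in Ly as (m & s & U & _); inversion U.
Qed.

Lemma fails_input_client c l d :
  Unf c (CIn l) -> (forall m, ~ Unf d (CUOut m)) -> (forall m, ~ Unf d (CROut m)) ->
  fails ([], Some c) ([], Some d).
Proof.
  intros U NUo NUr; apply fails_stuck.
  - exact (not_one_rchoice true _ _ U).
  - intro q; exact (no_tau_rchoice _ true _ _ _ U).
  - intros q T; apply tau_inv in T as (c' & l1 & a & s & l2 & E & Ud & _).
    injection E; intros; subst; exact (NUo _ Ud).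
  - intros al p' q' Lc Ld; destruct (lts_rchoice_inv true _ _ _ _ _ U Lc) as (a & s & -> & _).
    apply lts_CoNm_inv in Ld as (m & t & [Ud|Ud] & _); [exact (NUr _ Ud) | exact (NUo _ Ud)].
Qed.

(** * Replaying a run on top of histories *)

Lemma lts_rehist h x al h' y : lts (h, x) al (h', y) ->
  exists g, h' = g :: h /\ forall k, lts (k, x) al (g :: k, y).
Proof.
  inversion 1; subst; eexists; split; try reflexivity; intro k;
    [eapply lts_in | eapply lts_rout | eapply lts_in1 | eapply lts_rout1 | eapply lts_uout1]; eauto.
Qed.

Lemma tau_rehist h x h' y : tau (h, x) (h', y) -> h' = h /\ forall k, tau (k, x) (k, y).
Proof. inversion 1; subst; split; [reflexivity | intro k; eapply tau_uout; eauto]. Qed.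

Lemma red0_rehist h1 x h2 y C : red0 ((h1, x), (h2, y)) C ->
  forall k1 k2, exists C', red0 ((k1, x), (k2, y)) C'.
Proof.
  inversion 1 as [? [h1' x'] ? [h2' y'] al L1 L2 | ? [h1' x'] ? T | ? ? [h2' y'] T]; subst;
    intros k1 k2.
  - apply lts_rehist in L1 as (g1 & _ & L1); apply lts_rehist in L2 as (g2 & _ & L2).
    eexists; eapply red_comm; eauto.
  - apply tau_rehist in T as [_ T]; eexists; apply red_tau_l, T.
  - apply tau_rehist in T as [_ T]; eexists; apply red_tau_r, T.
Qed.

Definition liftc (H1 H2 : hist) (C : config) : config :=
  let '((h1, x), (h2, y)) := C in ((h1 ++ H1, x), (h2 ++ H2, y)).

Lemma red0_lift H1 H2 C C' : red0 C C' -> red0 (liftc H1 H2 C) (liftc H1 H2 C').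
Proof.
  destruct 1 as [[h1 x] [h1' x'] [h2 y] [h2' y'] al L1 L2 | [h1 x] [h1' x'] [h2 y] T
                | [h1 x] [h2 y] [h2' y'] T]; simpl.
  - apply lts_rehist in L1 as (g1 & -> & L1); apply lts_rehist in L2 as (g2 & -> & L2).
    eapply red_comm; [apply L1 | apply L2].
  - apply tau_rehist in T as [-> T]; apply red_tau_l, T.
  - apply tau_rehist in T as [-> T]; apply red_tau_r, T.
Qed.

Lemma red_lift H1 H2 C C' : red C C' -> red (liftc H1 H2 C) (liftc H1 H2 C').
Proof.
  destruct 1 as [C C' R | [h1 x] [h1' x'] [h2 y] [h2' y'] B1 B2 N NR].
  - apply red_base, red0_lift, R.
  - inversion B1; inversion B2; subst; simpl; apply red_rbk; try constructor; [exact N |].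
    intros [C' R]; apply NR; exact (red0_rehist _ _ _ _ _ R _ _).
Qed.

Lemma reds_lift H1 H2 C C' : reds C C' -> reds (liftc H1 H2 C) (liftc H1 H2 C').
Proof. induction 1; econstructor; eauto using red_lift. Qed.

Definition balanced (C : config) : Prop := length (fst (fst C)) = length (fst (snd C)).

Lemma red_balanced C C' : red C C' -> balanced C -> balanced C'.
Proof.
  unfold balanced; destruct 1 as [C C' R | [h1 x] [h1' x'] [h2 y] [h2' y'] B1 B2 _ _].
  - destruct R as [[h1 x] [h1' x'] [h2 y] [h2' y'] al L1 L2 | [h1 x] [h1' x'] [h2 y] T
                  | [h1 x] [h2 y] [h2' y'] T]; simpl; intro E.
    + apply lts_rehist in L1 as (g1 & -> & _); apply lts_rehist in L2 as (g2 & -> & _).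
      simpl; lia.
    + apply tau_rehist in T as [-> _]; exact E.
    + apply tau_rehist in T as [-> _]; exact E.
  - inversion B1; inversion B2; subst; simpl; lia.
Qed.

Lemma reds_balanced C C' : reds C C' -> balanced C -> balanced C'.
Proof. induction 1; eauto using red_balanced. Qed.

Lemma stuck_balanced_nil h1 x h2 y :
  stuck ((h1, x), (h2, y)) -> ~ slot_is_one x -> length h1 = length h2 -> h1 = [] /\ h2 = [].
Proof.
  intros S N E; destruct h1 as [|g1 h1], h2 as [|g2 h2]; try discriminate; [auto |].
  exfalso; apply S; eexists; apply red_rbk; try constructor; [exact N |].
  intros [C' R]; apply S; eexists; apply red_base, R.
Qed.

Lemma reds_rollback x y g1 g2 :
  fails ([], x) ([], y) -> reds (([g1], x), ([g2], y)) (([], g1), ([], g2)).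
Proof.
  intros ([h1 x'] & [h2 y'] & R & S & N).
  destruct (stuck_balanced_nil _ _ _ _ S N (reds_balanced _ _ R eq_refl)) as [-> ->].
  eapply reds_trans; [exact (reds_lift [g1] [g2] _ _ R) |].
  econstructor; [| constructor].
  apply red_rbk; try constructor; [exact N |].
  intros [C' R']; destruct (red0_rehist _ _ _ _ _ R' [] []) as [C'' R''].
  apply S; eexists; apply red_base, R''.
Qed.

Lemma fails_retract c d al rk sk g1 g2 :
  lts ([], Some c) al ([g1], Some rk) -> lts ([], Some d) (dual al) ([g2], Some sk) ->
  ~ compliant rk sk -> fails ([], g1) ([], g2) -> fails ([], Some c) ([], Some d).
Proof.
  intros Lc Ld NC F.
  eapply red_fails; [apply red_base; eapply red_comm; [exact Lc | exact Ld] |].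
  eapply reds_fails; [apply reds_rollback, not_compliant_st_fails, NC | exact F].
Qed.

(** * Compliance of the continuations *)

Lemma fails_rchoices_disjoint b c l d m :
  Unf c (rchoice b l) -> Unf d (rchoice (negb b) m) ->
  ~ (exists a rk sk, In (a, rk) l /\ In (a, sk) m) -> fails ([], Some c) ([], Some d).
Proof.
  intros Uc Ud NI; apply fails_stuck.
  - exact (not_one_rchoice _ _ _ Uc).
  - intro q; exact (no_tau_rchoice _ _ _ _ _ Uc).
  - intro q; exact (no_tau_rchoice _ _ _ _ _ Ud).
  - intros al p' q' Lc Ld.
    destruct (lts_rchoice_inv _ _ _ _ _ _ Uc Lc) as (a & rk & -> & Ia).
    destruct (lts_rchoice_inv _ _ _ _ _ _ Ud Ld) as (a' & sk & E & Ia').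
    rewrite dual_rlabel in E; apply rlabel_inj in E; subst a'; apply NI; exists a, rk, sk; auto.
Qed.

Lemma fails_rchoices b n c l d m : length l <= n ->
  Unf c (rchoice b l) -> Unf d (rchoice (negb b) m) ->
  (forall a rk sk, In (a, rk) l -> In (a, sk) m -> ~ compliant rk sk) ->
  fails ([], Some c) ([], Some d).
Proof.
  revert c l d m; induction n as [|n IH]; intros c l d m Hn Uc Ud NC;
    (destruct (classic (exists a rk sk, In (a, rk) l /\ In (a, sk) m))
       as [(a & rk & sk & Il & Im) | NI]; [| exact (fails_rchoices_disjoint _ _ _ _ _ Uc Ud NI)]).
  - destruct l; [destruct Il | simpl in Hn; lia].
  - destruct (lts_rchoice _ _ _ _ _ Uc Il) as (g1 & Lc & [-> | (l' & -> & Hl' & Ll')]);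
      destruct (lts_rchoice _ _ _ _ _ Ud Im) as (g2 & Ld & G2);
      (eapply fails_retract; [apply Lc | rewrite dual_rlabel; apply Ld | exact (NC _ _ _ Il Im) |]);
      [apply fails_dead_client |].
    destruct G2 as [-> | (m' & -> & Hm' & _)].
    + apply fails_dead_server; [exact (not_one_rchoice _ _ _ (Unf_rchoice b l')) |].
      intro q; exact (no_tau_rchoice _ _ _ _ _ (Unf_rchoice b l')).
    + apply (IH _ l' _ m'); [lia | apply Unf_rchoice | apply Unf_rchoice |].
      intros a' rk' sk' J1 J2; exact (NC _ _ _ (Hl' _ J1) (Hm' _ J2)).
Qed.

Lemma compliant_input_unary_output c l d a sk :
  Unf c (CIn l) -> uout d [(a, sk)] -> compliant_st ([], Some c) ([], Some d) ->
  exists rk, In (a, rk) l /\ compliant rk sk.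
Proof.
  intros Uc Ud Hc; apply NNPP; intro N; refine (fails_not_compliant_st _ _ _ Hc).
  destruct (classic (exists rk, In (a, rk) l)) as [[rk I] | NI].
  - destruct (lts_rchoice true _ _ _ _ Uc I) as (g & Lc & G).
    eapply (fails_retract _ _ _ rk sk); [apply Lc | apply lts_uout_unary, Ud | eauto |].
    destruct G as [-> | (l' & -> & _)]; [apply fails_dead_client |].
    apply fails_dead_server; [exact (not_one_rchoice _ _ _ (Unf_rchoice true l')) |].
    intro q; exact (no_tau_rchoice _ _ _ _ _ (Unf_rchoice true l')).
  - apply fails_stuck.
    + exact (not_one_rchoice true _ _ Uc).
    + intro q; exact (no_tau_rchoice _ true _ _ _ Uc).
    + intro q; exact (no_tau_uout_unary _ _ _ _ _ Ud).
    + intros al p' q' Lc Ld; destruct (lts_rchoice_inv true _ _ _ _ _ Uc Lc) as (b & rk & -> & Ib).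
      apply (lts_uout_unary_inv _ _ _ _ _ _ Ud) in Ld; injection Ld as ->; eauto.
Qed.

Lemma compliant_unary_output c a rk d :
  uout c [(a, rk)] -> compliant_st ([], Some c) ([], Some d) ->
  exists m, isum d m /\ exists sk, In (a, sk) m /\ compliant rk sk.
Proof.
  intros Uc Hc; apply NNPP; intro N; refine (fails_not_compliant_st _ _ _ Hc).
  destruct (classic (exists m sk, Unf d (CIn m) /\ In (a, sk) m)) as [(m & sk & Ud & I) | NI].
  - destruct (lts_rchoice true _ _ _ _ Ud I) as (g & Ld & _).
    eapply (fails_retract _ _ _ rk sk); [apply lts_uout_unary, Uc | apply Ld | |
                                          apply fails_dead_client].
    intro C; apply N; exists m; split; [exact Ud | eauto].
  - apply fails_output_client.
    + exact (not_one_uout _ _ Uc).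
    + intro q; exact (no_tau_uout_unary _ _ _ _ _ Uc).
    + intros al p' Lc; exists a; split; [exact (lts_uout_unary_inv _ _ _ _ _ _ Uc Lc) |].
      intros m s Ud I; eauto.
Qed.

Lemma rsum_rchoice b c l : Unf c (rchoice b l) ->
  rsum c (map (fun p => (rlabel b (fst p), snd p)) l).
Proof. intro U; exists l; destruct b; [left | right]; auto. Qed.

Lemma compliant_rchoices b rho sigma l m :
  Unf rho (rchoice b l) -> Unf sigma (rchoice (negb b) m) -> compliant rho sigma ->
  exists L M, rsum rho L /\ rsum sigma M /\
    exists al rk sk, In (al, rk) L /\ In (dual al, sk) M /\ compliant rk sk.
Proof.
  intros Ur Us Hc.
  exists (map (fun p => (rlabel b (fst p), snd p)) l),
         (map (fun p => (rlabel (negb b) (fst p), snd p)) m).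
  split; [exact (rsum_rchoice _ _ _ Ur) | split; [exact (rsum_rchoice _ _ _ Us) |]].
  apply NNPP; intro N; refine (fails_not_compliant_st _ _ _ Hc).
  apply (fails_rchoices b (length l) _ l _ m (le_n _) Ur Us).
  intros a rk sk Il Im C; apply N; exists (rlabel b a), rk, sk.
  rewrite dual_rlabel; repeat split; [| | exact C].
  - exact (in_map (fun p => (rlabel b (fst p), snd p)) _ (a, rk) Il).
  - exact (in_map (fun p => (rlabel (negb b) (fst p), snd p)) _ (a, sk) Im).
Qed.

Lemma compliant_input_uout rho sigma l m :
  Unf rho (CIn l) -> Unf sigma (CUOut m) -> compliant rho sigma ->
  forall a sk, In (a, sk) m -> exists rk, In (a, rk) l /\ compliant rk sk.
Proof.
  intros Ur Us Hc a sk I.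
  destruct (uout_commit [] _ _ _ _ Us I) as [Ud | T].
  - exact (compliant_input_unary_output _ _ _ _ _ Ur Ud Hc).
  - apply (compliant_input_unary_output _ _ (CUOut [(a, sk)]) _ _ Ur ltac:(left; constructor)).
    exact (compliant_st_red _ _ _ _ Hc (red_base _ _ (red_tau_r _ _ _ T))).
Qed.

Lemma compliant_uout_branch rho sigma l a rk :
  Unf rho (CUOut l) -> compliant rho sigma -> In (a, rk) l ->
  exists m, isum sigma m /\ exists sk, In (a, sk) m /\ compliant rk sk.
Proof.
  intros Ur Hc I; destruct (uout_commit [] _ _ _ _ Ur I) as [Uc | T].
  - exact (compliant_unary_output _ _ _ _ Uc Hc).
  - apply (compliant_unary_output (CUOut [(a, rk)])); [left; constructor |].
    exact (compliant_st_red _ _ _ _ Hc (red_base _ _ (red_tau_l _ _ _ T))).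
Qed.

Lemma compliant_uout rho sigma l :
  Unf rho (CUOut l) -> compliant rho sigma ->
  exists m, isum sigma m /\
    forall a rk, In (a, rk) l -> exists sk, In (a, sk) m /\ compliant rk sk.
Proof.
  intros Ur Hc; destruct l as [|[a0 r0] l].
  - exfalso; refine (fails_not_compliant_st _ _ (fails_inactive_client _ _ _ _ _) Hc).
    + exact (not_one_head _ _ Ur ltac:(discriminate)).
    + intros al p' L; inversion L; subst; unf_det; eapply app_cons_not_nil; eauto.
    + intros q T; apply tau_inv in T as (c & l1 & a & s & l2 & E & U & _).
      injection E; intros; subst; unf_det; eapply app_cons_not_nil; eauto.
  - destruct (compliant_uout_branch _ _ _ a0 r0 Ur Hc (or_introl eq_refl)) as (m & Um & _).
    exists m; split; [exact Um |]; intros a rk I.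
    destruct (compliant_uout_branch _ _ _ _ _ Ur Hc I) as (m' & Um' & Hsk).
    unfold isum in *; unf_det; exact Hsk.
Qed.

Lemma compliant_unfoldable rho sigma : compliant rho sigma -> exists k, Unf rho k.
Proof.
  intro Hc; apply NNPP; intro NU.
  refine (fails_not_compliant_st _ _ (fails_inactive_client _ _ _ _ _) Hc).
  - intro U; apply NU; exists COne; exact U.
  - intros al p' L; apply NU; inversion L; subst; eauto.
  - intros q T; apply NU; inversion T; subst; eauto.
Qed.

Theorem lemma4 (rho sigma : ctr) :
  contract rho -> contract sigma -> compliant rho sigma ->
  is_one rho \/
  (exists L M, rsum rho L /\ rsum sigma M /\
     exists al rk sk, In (al, rk) L /\ In (dual al, sk) M /\ compliant rk sk) \/
  (exists l m, uout rho l /\ isum sigma m /\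
     forall a rk, In (a, rk) l -> exists sk, In (a, sk) m /\ compliant rk sk) \/
  (exists l m, isum rho l /\ uout sigma m /\
     forall a sk, In (a, sk) m -> exists rk, In (a, rk) l /\ compliant rk sk).
Proof.
  intros _ _ Hc; destruct (compliant_unfoldable _ _ Hc) as [k Uk].
  pose proof (Unf_head _ _ Uk) as Hk.
  destruct k as [| l | l | l | ? | ? ?]; try contradiction.
  - left; exact Uk.
  - destruct (classic (exists m, Unf sigma (CUOut m))) as [[m Um] | NUo].
    { right; right; right; exists l, m; split; [exact Uk | split; [left; exact Um |]].
      exact (compliant_input_uout _ _ _ _ Uk Um Hc). }
    destruct (classic (exists m, Unf sigma (CROut m))) as [[m Um] | NUr].
    { right; left; exact (compliant_rchoices true _ _ _ _ Uk Um Hc). }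
    exfalso; refine (fails_not_compliant_st _ _ (fails_input_client _ _ _ Uk _ _) Hc); eauto.
  - destruct (classic (exists m, Unf sigma (CIn m))) as [[m Um] | NUi].
    { right; left; exact (compliant_rchoices false _ _ _ _ Uk Um Hc). }
    exfalso; refine (fails_not_compliant_st _ _ (fails_output_client _ _ _ _ _) Hc).
    + exact (not_one_rchoice false _ _ Uk).
    + intro q; exact (no_tau_rchoice _ false _ _ _ Uk).
    + intros al p' L; destruct (lts_rchoice_inv false _ _ _ _ _ Uk L) as (a & s & -> & _).
      exists a; split; [reflexivity | intros m s' Um; exfalso; eauto].
  - right; right; left; destruct (compliant_uout _ _ _ Uk Hc) as (m & Um & Hm).
    exists l, m; split; [left; exact Uk | split; [exact Um | exact Hm]].
Qed.
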